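(* Consider the randomized gossip model described in the context. If disagreement divergence is achieved almost surely (for some initial value), then $\prod_{k=0}^\infty (1+2S_k)=\infty$.
   Context: Network with node set $\mathcal V=\{1,\dots,n\}$, $n\ge 3$. Let $A=[a_{ij}]$ be an $n\times n$ stochastic matrix. At each time $k=0,1,2,\dots$, independently of the past and of node states, a node $i$ is drawn with probability $1/n$ and then the pair $(i,j)$ is selected with probability $a_{ij}$. Given that pair $(i,j)$ is selected at time $k$, independently of time, node states and pair selection, node $i$: with probability $\alpha$ (event $\mathscr A_{ij}(k)$) sets $x_i(k+1)=(1-T_k)x_i(k)+T_kx_j(k)$, $0<T_k\le1$; with probability $\beta$ (event $\mathscr N_{ij}(k)$) sets $x_i(k+1)=x_i(k)$; with probability $\gamma$ (event $\mathscr R_{ij}(k)$) sets $x_i(k+1)=(1+S_k)x_i(k)-S_kx_j(k)$, $S_k>0$; $\alpha+\beta+\gamma=1$. Node $j$ updates analogously according to events $\mathscr A_{ji}(k),\mathscr N_{ji}(k),\mathscr R_{ji}(k)$ (possibly dependent on node $i$'s event); other nodes keep their states. Start at time $k_0\ge0$ from $x(k_0)\in\mathbb R^n$. Let $\mathcal H(k)=\max_i x_i(k)-\min_i x_i(k)$. Disagreement divergence is achieved a.s. for an initial value if $\mathbf P(\limsup_{k\to\infty}\mathcal H(k)>M)=1$ for all $M\ge0$. *)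

From HB Require Import structures.
From mathcomp Require Import all_boot all_order all_algebra.
From mathcomp Require Import all_classical all_reals all_analysis.
Set Implicit Arguments. Unset Strict Implicit. Unset Printing Implicit Defensive.
Import Order.TTheory GRing.Theory Num.Theory.
Import numFieldNormedType.Exports.
Local Open Scope ring_scope.

(* The three possible local events for a selected node:
   Att = attraction (event A), Neu = neglect (event N), Rep = repulsion (event R). *)
Inductive gev := Att | Neu | Rep.

Section Gossip.
Variable R : realType.

Definition gev_prob (alpha beta gamma : R) (e : gev) : R :=
  match e with Att => alpha | Neu => beta | Rep => gamma end.

Definition node_update (Tk Sk : R) (e : gev) (xi xj : R) : R :=
  match e with
  | Att => (1 - Tk) * xi + Tk * xj
  | Neu => xi
  | Rep => (1 + Sk) * xi - Sk * xj
  end.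

Definition gossip_step n (Tk Sk : R) (sel : 'I_n * 'I_n * gev * gev)
    (x : 'I_n -> R) : 'I_n -> R :=
  let: (i, j, ei, ej) := sel in
  fun l => if l == i then node_update Tk Sk ei (x i) (x j)
           else if l == j then node_update Tk Sk ej (x j) (x i)
           else x l.

(* max_i x_i and min_i x_i (computed in the extended reals, then projected;
   for n > 0 these are the usual maximum and minimum) *)
Definition vmax n (x : 'I_n -> R) : R := fine (\big[Order.max/-oo%E]_(i < n) (x i)%:E).
Definition vmin n (x : 'I_n -> R) : R := fine (\big[Order.min/+oo%E]_(i < n) (x i)%:E).

Definition Hdis n (x : 'I_n -> R) : R := vmax x - vmin x.

End Gossip.

(* The disagreement H can grow by at most the factor 1 + 2 S_k in one step: both updated
   nodes move by at most S_k H beyond the current range, so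
   H(k+1) <= (1 + 2 S_k) H(k), and hence H(k) <= H(k0) prod_{k0 <= i < k} (1 + 2 S_i) on
   every sample path.  If the product stayed bounded (it is nondecreasing, so otherwise it
   diverges), the lim sup of H would be bounded by a deterministic constant M, and the event
   lim sup H > M would be empty rather than of probability one. *)
From HB Require Import structures.
From mathcomp Require Import all_boot all_order all_algebra.
From mathcomp Require Import all_classical all_reals all_analysis.
From mathcomp Require Import lra.
Import Order.TTheory GRing.Theory Num.Theory.
Import numFieldNormedType.Exports.
Set Implicit Arguments.
Unset Strict Implicit.

Local Open Scope classical_set_scope.
Local Open Scope ring_scope.

Section Products.
Variable R : realType.
Implicit Types (c h : nat -> R).

Lemma prod_nat_ge1 c m N : (forall i, 1 <= c i) -> 1 <= \prod_(m <= i < N) c i.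
Proof. by move=> c_ge1; apply: (big_ind (fun y => 1 <= y)) => // y z; exact: mulr_ege1. Qed.

Lemma prod_nat_subrange_le c m a b N : (forall i, 1 <= c i) ->
  (m <= a)%N -> (a <= b)%N -> (b <= N)%N ->
  \prod_(a <= i < b) c i <= \prod_(m <= i < N) c i.
Proof.
move=> c_ge1 ma ab bN.
rewrite (big_cat_nat ma (leq_trans ab bN)) (big_cat_nat ab bN) /=.
have inner_ge0 : 0 <= \prod_(a <= i < b) c i := le_trans ler01 (prod_nat_ge1 _ _ c_ge1).
by rewrite mulrC -mulrA ler_peMr ?mulr_ege1 ?prod_nat_ge1.
Qed.

Lemma le_prod_growth c h k0 : (forall k, 0 <= c k) ->
    (forall k, (k0 <= k)%N -> h k.+1 <= c k * h k) ->
  forall k, (k0 <= k)%N -> h k <= h k0 * \prod_(k0 <= i < k) c i.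
Proof.
move=> c_ge0 grow k /subnK <-; elim: (k - k0)%N => [|j IH].
  by rewrite add0n big_geq // mulr1.
rewrite addSn big_nat_recr ?leq_addl //= mulrA mulrC.
by apply: le_trans (grow _ (leq_addl _ _)) _; rewrite ler_wpM2l.
Qed.

Lemma nondecreasing_unbounded_cvgy (u : R ^nat) :
  nondecreasing_seq u -> ~ has_ubound (range u) -> u @ \oo --> +oo.
Proof.
move=> u_nd u_unbd; apply: nondecreasing_dvgn_lt => // u_cvg; apply: u_unbd.
have [M [_ uM]] := cvg_seq_bounded u_cvg.
by exists (M + 1) => _ [k _ <-]; apply: le_trans (ler_norm _) (uM _ _ k I); rewrite ltrDl.
Qed.

End Products.

Section Disagreement.
Variables (R : realType) (n : nat).
Implicit Types (x : 'I_n -> R) (b : R).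

Lemma bigmaxe_fin_num x (i : 'I_n) :
  \big[Order.max/-oo%E]_(j < n) (x j)%:E \is a fin_num.
Proof.
rewrite fin_numE; apply/andP; split.
  by apply/eqP => hoo; have := le_bigmax -oo%E (fun j => (x j)%:E) i; rewrite hoo.
by rewrite lt_eqF //; apply: bigmax_lt => [|j _]; [rewrite ltNye | exact: ltry].
Qed.

Lemma bigmine_fin_num x (i : 'I_n) :
  \big[Order.min/+oo%E]_(j < n) (x j)%:E \is a fin_num.
Proof.
rewrite fin_numE; apply/andP; split; last first.
  by apply/eqP => hoo; have := bigmin_le +oo%E i (fun j => (x j)%:E); rewrite hoo.
by rewrite gt_eqF //; apply: lt_bigmin => [|j _]; [rewrite ltNye | exact: ltNyr].
Qed.

Lemma le_vmax x i : x i <= vmax x.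
Proof. by rewrite -lee_fin /vmax fineK ?(bigmaxe_fin_num x i) //; exact: le_bigmax. Qed.

Lemma vmin_le x i : vmin x <= x i.
Proof. by rewrite -lee_fin /vmin fineK ?(bigmine_fin_num x i) //; exact: bigmin_le. Qed.

Lemma vmax_le x b : (0 < n)%N -> (forall i, x i <= b) -> vmax x <= b.
Proof.
move=> n_gt0 xb; rewrite -lee_fin /vmax fineK ?(bigmaxe_fin_num x (Ordinal n_gt0)) //.
by apply: bigmax_le => [|i _]; [exact: leNye | rewrite lee_fin].
Qed.

Lemma le_vmin x b : (0 < n)%N -> (forall i, b <= x i) -> b <= vmin x.
Proof.
move=> n_gt0 bx; rewrite -lee_fin /vmin fineK ?(bigmine_fin_num x (Ordinal n_gt0)) //.
by apply: le_bigmin => [|i _]; [exact: leey | rewrite lee_fin].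
Qed.

Lemma Hdis_ge0 x : (0 < n)%N -> 0 <= Hdis x.
Proof.
move=> n_gt0; rewrite subr_ge0.
exact: le_trans (vmin_le x (Ordinal n_gt0)) (le_vmax x _).
Qed.

Lemma node_update_bounds (T S : R) e a b xi xj : 0 < T <= 1 -> 0 < S ->
  a <= xi <= b -> a <= xj <= b ->
  a - S * (b - a) <= node_update T S e xi xj <= b + S * (b - a).
Proof.
move=> /andP[T_gt0 T_le1] S_gt0 /andP[axi xib] /andP[axj xjb].
by case: e => /=; apply/andP; split; nra.
Qed.

Lemma Hdis_gossip_step (T S : R) sel x : (0 < n)%N -> 0 < T <= 1 -> 0 < S ->
  Hdis (gossip_step T S sel x) <= (1 + 2 * S) * Hdis x.
Proof.
move=> n_gt0 T01 S_gt0.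
have x_range l : vmin x <= x l <= vmax x by rewrite vmin_le le_vmax.
have step_range l : vmin x - S * Hdis x <= gossip_step T S sel x l
                                         <= vmax x + S * Hdis x.
  case: sel => [[[i j] ei] ej] /=.
  case: (l == i); first exact: node_update_bounds (x_range i) (x_range j).
  case: (l == j); first exact: node_update_bounds (x_range j) (x_range i).
  have SH_ge0 : 0 <= S * Hdis x := mulr_ge0 (ltW S_gt0) (Hdis_ge0 x n_gt0).
  by case/andP: (x_range l) => xl_ge xl_le; apply/andP; split; lra.
have := vmax_le n_gt0 (fun l => proj2 (andP (step_range l))).
have := le_vmin n_gt0 (fun l => proj1 (andP (step_range l))).
rewrite /Hdis; lra.
Qed.

Lemma Hdis_gossip_trajectory (Tw S : nat -> R) sel (x : nat -> 'I_n -> R) k0 :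
    (0 < n)%N -> (forall k, 0 < Tw k <= 1) -> (forall k, 0 < S k) ->
    (forall k, (k0 <= k)%N -> x k.+1 = gossip_step (Tw k) (S k) (sel k) (x k)) ->
  forall k, (k0 <= k)%N -> Hdis (x k) <= Hdis (x k0) * \prod_(k0 <= i < k) (1 + 2 * S i).
Proof.
move=> n_gt0 Tw01 S_gt0 x_step; apply: le_prod_growth => [k|k k0k].
  by rewrite addr_ge0 ?mulr_ge0 ?ltW.
by rewrite x_step // Hdis_gossip_step.
Qed.

End Disagreement.

Lemma limn_esup_le_eventually (R : realType) (u : (\bar R)^nat) (M : \bar R) k0 :
  (forall k, (k0 <= k)%N -> (u k <= M)%E) -> (limn_esup u <= M)%E.
Proof.
move=> uM; apply: ge_ereal_inf.
exists (ereal_sup (u @` [set k | (k0 <= k)%N])).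
  by exists [set k | (k0 <= k)%N] => //; exists k0.
by apply: ge_ereal_sup => _ [k k0k <-]; exact: uM.
Qed.

Theorem theorem2
  (R : realType) (n : nat) (A : 'M[R]_n)
  (alpha beta gamma : R) (Tw S : nat -> R)
  (q : gev -> gev -> R)
  (d : measure_display) (Omega : measurableType d) (P : probability Omega R)
  (Y : nat -> Omega -> 'I_n * 'I_n * gev * gev)
  (x : nat -> Omega -> 'I_n -> R) (k0 : nat) (x0 : 'I_n -> R) :
  (3 <= n)%N ->
  (forall i j, 0 <= A i j) ->
  (forall i, \sum_(j < n) A i j = 1) ->
  0 <= alpha -> 0 <= beta -> 0 <= gamma -> alpha + beta + gamma = 1 ->
  (forall k, 0 < Tw k <= 1) ->
  (forall k, 0 < S k) ->
  (forall e1 e2, 0 <= q e1 e2) ->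
  (forall e1, q e1 Att + q e1 Neu + q e1 Rep = gev_prob alpha beta gamma e1) ->
  (forall e2, q Att e2 + q Neu e2 + q Rep e2 = gev_prob alpha beta gamma e2) ->
  (forall k v, measurable [set w | Y k w = v]) ->
  (forall k i j e1 e2,
      P [set w | Y k w = (i, j, e1, e2)] = ((A i j / n%:R) * q e1 e2)%:E) ->
  (forall (s : seq nat) (f : nat -> 'I_n * 'I_n * gev * gev), uniq s ->
      P (\bigcap_(t in [set` s]) [set w | Y t w = f t])
      = (\prod_(t <- s) P [set w | Y t w = f t])%E) ->
  (forall w, x k0 w = x0) ->
  (forall k w, (k0 <= k)%N -> x k.+1 w = gossip_step (Tw k) (S k) (Y k w) (x k w)) ->
  (forall M : R, 0 <= M ->
      P [set w | (M%:E < limn_esup (fun k => (Hdis (x k w))%:E))%E] = 1%E) ->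
  (fun N => \prod_(0 <= k < N) (1 + 2 * S k)) @ \oo --> +oo.
Proof.
move=> n_ge3 _ _ _ _ _ _ Tw01 S_gt0 _ _ _ _ _ _ x_k0 x_step diverge.
have n_gt0 : (0 < n)%N by exact: leq_trans n_ge3.
have factor_ge1 k : 1 <= 1 + 2 * S k by rewrite lerDl mulr_ge0 ?ltW.
apply: nondecreasing_unbounded_cvgy => [m N mN | [B prodB]].
  exact: prod_nat_subrange_le.
set M := Hdis x0 * B.
have H_le_M w k : (k0 <= k)%N -> Hdis (x k w) <= M.
  move=> k0k; apply: le_trans (Hdis_gossip_trajectory n_gt0 Tw01 S_gt0 (x_step^~ w) k0k) _.
  rewrite x_k0 ler_wpM2l ?Hdis_ge0 //.
  apply: le_trans; last exact: (prodB _ (ex_intro2 _ _ k I erefl)).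
  exact: prod_nat_subrange_le.
have B_ge1 : 1 <= B by have := prodB _ (ex_intro2 _ _ 0%N I erefl); rewrite big_geq.
have M_ge0 : 0 <= M := mulr_ge0 (Hdis_ge0 x0 n_gt0) (le_trans ler01 B_ge1).
suff no_divergence : [set w | (M%:E < limn_esup (fun k => (Hdis (x k w))%:E))%E] = set0.
  have := diverge M M_ge0; rewrite no_divergence measure0 => /eqP.
  by rewrite eqe eq_sym oner_eq0.
apply/seteqP; split => // w /=; rewrite ltNge => /negP; apply.
by apply: (@limn_esup_le_eventually _ _ _ k0) => k k0k; rewrite lee_fin H_le_M.
Qed.
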